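(* Let $n\ge 1$ and let $H^{2n+2}$ be the Lie group of real matrices $$M=\begin{pmatrix} I_n & P & Q & 0\\ 0 & 1 & r & 0\\ 0&0&1&0\\ 0&0&0&e^{2\pi i s}\end{pmatrix},$$ where $P=(p_i)$, $Q=(q_i)$ are real $n\times 1$ matrices and $r,s\in\mathbb R$. Let $\Gamma\subset H^{2n+2}$ be the subgroup of matrices with integer entries and $W^{2n+2}=H^{2n+2}/\Gamma$. Let $g=\sum_{i=1}^{2n+2}\alpha_i\otimes\alpha_i$ be the left-invariant Riemannian metric on $H^{2n+2}$ (and the induced metric on $W^{2n+2}$). Let $J$ be an almost complex structure on $W^{2n+2}$ induced by a left-invariant almost complex structure on $H^{2n+2}$ that is compatible with $g$, i.e. $g(JX,JY)=g(X,Y)$. If the almost Hermitian structure $(g,J)$ is symplectic, i.e. its Kähler form $F(X,Y)=g(JX,Y)$ is closed, then $J$ has holomorphic type $1$.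
   Context: Global coordinates on $H^{2n+2}$: $x_i(M)=p_i$, $x_{n+1}(M)=r$, $x_{n+1+i}(M)=q_i$ ($1\le i\le n$), $x_{2n+2}(M)=s$. Left-invariant 1-forms: $\alpha_i=dx_i$ ($1\le i\le n+1$), $\alpha_{n+1+i}=dx_{n+1+i}-x_i\,dx_{n+1}$ ($1\le i\le n$), $\alpha_{2n+2}=dx_{2n+2}$. A smooth complex-valued function $f$ on an almost complex manifold $(M,J)$ is holomorphic if $df$ is a $(1,0)$-form with respect to $J$, i.e. $df(JX)=i\,df(X)$ for all tangent vectors $X$. For $x\in M$, $m(x)$ denotes the maximal number of holomorphic functions defined on a neighborhood of $x$ whose differentials are linearly independent at $x$. $J$ has holomorphic type $m$ if $m(x)=m$ for every $x\in M$. *)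

From Stdlib Require Import Reals Lra Lia Arith List.
Open Scope R_scope.

(* Points of H^{2n+2} are identified, via the global coordinates of the paper,
   with R^{2n+2}.  We use 0-based indices: paper coordinate x_i corresponds to
   index i-1.  Thus  p_i ~ index i-1 (i=1..n),  r ~ index n,
   q_i ~ index n+i (i=1..n),  s ~ index 2n+1.
   A point is a map nat -> R; only indices < 2n+2 are relevant. *)
Definition Point := nat -> R.

Definition dimH (n : nat) : nat := (2 * n + 2)%nat.

Fixpoint sumR (N : nat) (F : nat -> R) : R :=
  match N with
  | O => 0
  | S m => sumR m F + F m
  end.

Definition ecoord (k : nat) : Point := fun i => if Nat.eqb i k then 1 else 0.
Definition shift (y : Point) (k : nat) (t : R) : Point :=
  fun i => if Nat.eqb i k then y i + t else y i.

(* Left-invariant coframe (0-based):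
   alpha_j = dx_j  for j <= n and j = 2n+1,
   alpha_{n+i} = dx_{n+i} - x_{i-1} dx_n   for i = 1..n.
   alpha n j y X = value of alpha_j at the point y on the vector X. *)
Definition in_q (n j : nat) : bool := (Nat.leb (n + 1) j && Nat.ltb j (2 * n + 1))%bool.

Definition alpha (n j : nat) (y : Point) (X : Point) : R :=
  if in_q n j then X j - y (j - n - 1)%nat * X n else X j.

(* Dual left-invariant frame: E_j = d/dx_j, except
   E_n = d/dx_n + sum_{i=1..n} x_{i-1} d/dx_{n+i}. *)
Definition Evec (n j : nat) (y : Point) : Point :=
  fun k => if Nat.eqb k j then 1
           else if (Nat.eqb j n && in_q n k)%bool then y (k - n - 1)%nat else 0.

Definition gmet (n : nat) (y : Point) (X Y : Point) : R :=
  sumR (dimH n) (fun j => alpha n j y X * alpha n j y Y).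

(* A left-invariant (1,1)-tensor J is given by a constant matrix Jm in the
   left-invariant frame:  J E_l = sum_j Jm j l E_j.  Japply gives J_y X in
   coordinates. *)
Definition Japply (n : nat) (Jm : nat -> nat -> R) (y : Point) (X : Point) : Point :=
  fun k => sumR (dimH n)
             (fun j => sumR (dimH n) (fun l => Jm j l * alpha n l y X) * Evec n j y k).

Definition almost_complex (n : nat) (Jm : nat -> nat -> R) : Prop :=
  forall (y X : Point) (k : nat), (k < dimH n)%nat ->
    Japply n Jm y (Japply n Jm y X) k = - X k.

Definition compatible (n : nat) (Jm : nat -> nat -> R) : Prop :=
  forall (y X Y : Point),
    gmet n y (Japply n Jm y X) (Japply n Jm y Y) = gmet n y X Y.

Definition Fcoord (n : nat) (Jm : nat -> nat -> R) (y : Point) (a b : nat) : R :=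
  gmet n y (Japply n Jm y (ecoord a)) (ecoord b).

(* dF = 0:  (dF)(d_a,d_b,d_c) = d_a F_bc + d_b F_ca + d_c F_ab = 0 *)
Definition symplectic (n : nat) (Jm : nat -> nat -> R) : Prop :=
  forall (y : Point) (a b c : nat),
    (a < dimH n)%nat -> (b < dimH n)%nat -> (c < dimH n)%nat ->
    exists L1 L2 L3 : R,
      derivable_pt_lim (fun t => Fcoord n Jm (shift y a t) b c) 0 L1 /\
      derivable_pt_lim (fun t => Fcoord n Jm (shift y b t) c a) 0 L2 /\
      derivable_pt_lim (fun t => Fcoord n Jm (shift y c t) a b) 0 L3 /\
      L1 + L2 + L3 = 0.

Definition ball (N : nat) (x : Point) (eps : R) (y : Point) : Prop :=
  forall k, (k < N)%nat -> Rabs (y k - x k) < eps.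

(* f is smooth (C^infinity) on U, with D l = iterated partial derivative
   d_{l_1} d_{l_2} ... d_{l_m} f (D nil = f): all iterated partials exist
   and are continuous on U. *)
Definition smooth_on (N : nat) (U : Point -> Prop) (f : Point -> R)
  (D : list nat -> Point -> R) : Prop :=
  (forall y, U y -> D nil y = f y) /\
  (forall (l : list nat) (y : Point) (k : nat), U y -> (k < N)%nat ->
     derivable_pt_lim (fun t => D l (shift y k t)) 0 (D (k :: l) y)) /\
  (forall (l : list nat) (y : Point), U y ->
     forall eps, eps > 0 -> exists delta, delta > 0 /\
       forall z, U z -> ball N y delta z -> Rabs (D l z - D l y) < eps).

Definition dif (N : nat) (D : list nat -> Point -> R) (y X : Point) : R :=
  sumR N (fun k => X k * D (k :: nil) y).

(* f = u + i v is holomorphic on U: df(JX) = i df(X) for every tangent X,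
   i.e. du(JX) = - dv(X) and dv(JX) = du(X). *)
Definition holomorphic_on (n : nat) (Jm : nat -> nat -> R) (U : Point -> Prop)
  (u v : Point -> R) (Du Dv : list nat -> Point -> R) : Prop :=
  smooth_on (dimH n) U u Du /\ smooth_on (dimH n) U v Dv /\
  forall y X, U y ->
    dif (dimH n) Du y (Japply n Jm y X) = - dif (dimH n) Dv y X /\
    dif (dimH n) Dv y (Japply n Jm y X) = dif (dimH n) Du y X.

(* There exist m holomorphic functions f_l = u_l + i v_l (l < m) on a
   neighbourhood of x whose differentials are C-linearly independent at x. *)
Definition hol_family (n : nat) (Jm : nat -> nat -> R) (x : Point) (m : nat) : Prop :=
  exists (eps : R) (u v : nat -> Point -> R) (Du Dv : nat -> list nat -> Point -> R),
    eps > 0 /\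
    (forall l, (l < m)%nat ->
       holomorphic_on n Jm (ball (dimH n) x eps) (u l) (v l) (Du l) (Dv l)) /\
    (forall a b : nat -> R,
       (forall X : Point,
          sumR m (fun l => a l * dif (dimH n) (Du l) x X - b l * dif (dimH n) (Dv l) x X) = 0 /\
          sumR m (fun l => a l * dif (dimH n) (Dv l) x X + b l * dif (dimH n) (Du l) x X) = 0) ->
       forall l, (l < m)%nat -> a l = 0 /\ b l = 0).

Definition hol_type (n : nat) (Jm : nat -> nat -> R) (k : nat) : Prop :=
  forall x : Point,
    hol_family n Jm x k /\ (forall m, hol_family n Jm x m -> (m <= k)%nat).

(** Split the tangent space into [V], spanned by the [p]- and [r]-directions,
    and [Z], spanned by the [q]- and [s]-directions. Closedness of the Kaehler form
    [F(X, Y) = g(JX, Y)] forces [J] to map the [q]-directions into [V]; as [J] is orthogonal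
    and skew and [dim V = dim Z], [J] then exchanges [V] and [Z]. For a holomorphic [f], the
    Cauchy-Riemann equations along [V] and the symmetry of second derivatives make
    [[E_(p_i), E_r] f = d f / d q_i] vanish, so [df] is determined by [df(E_s)]:
    [df = df(E_s) theta] for one fixed [(1,0)]-form [theta]. Hence any two holomorphic
    differentials are [C]-dependent, while the linear function with differential [theta]
    is holomorphic everywhere. *)

From Pilot Require Import Defs.
From Stdlib Require Import Reals Lra Lia List FunctionalExtensionality.
From Coquelicot Require Coquelicot.
Open Scope R_scope.

Lemma sumR_ext M F G : (forall i, (i < M)%nat -> F i = G i) -> sumR M F = sumR M G.
Proof.
  induction M as [|M IH]; intros H; simpl; [reflexivity|].
  rewrite IH by (intros; apply H; lia). rewrite H by lia. reflexivity.
Qed.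

Lemma sumR_plus M F G : sumR M (fun i => F i + G i) = sumR M F + sumR M G.
Proof. induction M as [|M IH]; simpl; [lra|]. rewrite IH; lra. Qed.

Lemma sumR_scal_l M c F : sumR M (fun i => c * F i) = c * sumR M F.
Proof. induction M as [|M IH]; simpl; [lra|]. rewrite IH; lra. Qed.

Lemma sumR_scal_r M c F : sumR M (fun i => F i * c) = sumR M F * c.
Proof. induction M as [|M IH]; simpl; [lra|]. rewrite IH; lra. Qed.

Lemma sumR_opp M F : sumR M (fun i => - F i) = - sumR M F.
Proof. induction M as [|M IH]; simpl; [lra|]. rewrite IH; lra. Qed.

Lemma sumR_zero M F : (forall i, (i < M)%nat -> F i = 0) -> sumR M F = 0.
Proof. intros H. rewrite (sumR_ext M F (fun _ => 0)) by auto. clear H. induction M; simpl; lra. Qed.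

Lemma sumR_const M c : sumR M (fun _ => c) = INR M * c.
Proof. induction M as [|M IH]; simpl; [lra|]. rewrite IH. destruct M; simpl; lra. Qed.

Lemma sumR_swap M K F :
  sumR M (fun i => sumR K (fun j => F i j)) = sumR K (fun j => sumR M (fun i => F i j)).
Proof.
  induction M as [|M IH]; simpl.
  - symmetry; apply sumR_zero; auto.
  - rewrite IH, <- sumR_plus; reflexivity.
Qed.

Lemma sumR_single M k F : (k < M)%nat ->
  (forall j, (j < M)%nat -> j <> k -> F j = 0) -> sumR M F = F k.
Proof.
  induction M as [|M IH]; intros Hk H; [lia|]. simpl.
  destruct (Nat.eq_dec k M) as [->|Hne].
  - rewrite sumR_zero; [lra|]. intros; apply H; lia.
  - rewrite IH by (lia || (intros; apply H; lia)). rewrite (H M) by lia. lra.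
Qed.

Lemma sumR_split A B F : sumR (A + B) F = sumR A F + sumR B (fun i => F (A + i)%nat).
Proof.
  induction B as [|B IH]; simpl.
  - rewrite Nat.add_0_r; lra.
  - rewrite Nat.add_succ_r; simpl. rewrite IH; lra.
Qed.

Lemma sumR_first_two M F : (2 <= M)%nat ->
  (forall l, (2 <= l)%nat -> (l < M)%nat -> F l = 0) -> sumR M F = F 0%nat + F 1%nat.
Proof.
  induction M as [|M IH]; intros HM H; [lia|].
  destruct (Nat.eq_dec M 1) as [->|HM1]; simpl; [lra|].
  rewrite IH by (lia || (intros; apply H; lia)). rewrite (H M) by lia. lra.
Qed.

Lemma sumR_nonneg M F : (forall i, (i < M)%nat -> 0 <= F i) -> 0 <= sumR M F.
Proof.
  induction M as [|M IH]; intros H; simpl; [lra|].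
  pose proof (H M ltac:(lia)). pose proof (IH ltac:(intros; apply H; lia)). lra.
Qed.

Lemma sumR_nonneg_eq0 M F : (forall i, (i < M)%nat -> 0 <= F i) -> sumR M F = 0 ->
  forall i, (i < M)%nat -> F i = 0.
Proof.
  induction M as [|M IH]; simpl; intros Hp Hs i Hi; [lia|].
  assert (0 <= sumR M F) by (apply sumR_nonneg; intros; apply Hp; lia).
  assert (0 <= F M) by (apply Hp; lia).
  destruct (Nat.eq_dec i M) as [->|]; [lra|].
  apply IH; [intros; apply Hp; lia | lra | lia].
Qed.

Lemma sumR_abs_le M (c w : nat -> R) d : (forall k, (k < M)%nat -> Rabs (w k) <= d) ->
  Rabs (sumR M (fun k => c k * w k)) <= sumR M (fun k => Rabs (c k)) * d.
Proof.
  induction M as [|M IH]; intros H; simpl.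
  - rewrite Rabs_R0; lra.
  - eapply Rle_trans; [apply Rabs_triang|]. rewrite Rmult_plus_distr_r.
    apply Rplus_le_compat; [apply IH; intros; apply H; lia|].
    rewrite Rabs_mult. apply Rmult_le_compat_l; [apply Rabs_pos | apply H; lia].
Qed.

Lemma in_q_iff n k : in_q n k = true <-> (n + 1 <= k /\ k < 2 * n + 1)%nat.
Proof. unfold in_q. rewrite Bool.andb_true_iff, Nat.leb_le, Nat.ltb_lt. tauto. Qed.

Lemma in_q_false n k : (k < n + 1)%nat \/ (2 * n + 1 <= k)%nat -> in_q n k = false.
Proof. intros H. destruct (in_q n k) eqn:E; auto. apply in_q_iff in E. lia. Qed.

Ltac case_eqb := repeat match goal with
  | |- context [Nat.eqb ?a ?b] => destruct (Nat.eqb_spec a b)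
  end.

Lemma sumR_ecoord_r M a F : (a < M)%nat -> sumR M (fun l => F l * ecoord a l) = F a.
Proof.
  intros Ha. rewrite (sumR_single _ a); auto.
  - unfold ecoord; rewrite Nat.eqb_refl; lra.
  - intros j _ Hj. unfold ecoord. case_eqb; [lia|lra].
Qed.

Lemma sumR_ecoord_l M a F : (a < M)%nat -> sumR M (fun l => ecoord a l * F l) = F a.
Proof. intros Ha. rewrite <- (sumR_ecoord_r M a F) by auto. apply sumR_ext; intros; lra. Qed.

Lemma alpha_sumR n j y M C W :
  alpha n j y (fun k => sumR M (fun m => C m * W m k)) = sumR M (fun m => C m * alpha n j y (W m)).
Proof.
  unfold alpha. destruct (in_q n j); [|reflexivity].
  unfold Rminus. rewrite <- sumR_scal_l, <- sumR_opp, <- sumR_plus.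
  apply sumR_ext; intros; lra.
Qed.

Lemma alpha_Evec n j a y : alpha n j y (Evec n a y) = if Nat.eqb j a then 1 else 0.
Proof.
  unfold alpha, Evec. destruct (in_q n j) eqn:Hq.
  - rewrite (in_q_false n n) by lia. apply in_q_iff in Hq.
    case_eqb; simpl; subst; try lia; lra.
  - case_eqb; subst; rewrite ?Hq, ?Bool.andb_false_r; simpl; try lia; lra.
Qed.

Lemma Evec_split n j y k : Evec n j y k =
  (if Nat.eqb j k then 1 else 0) +
  (if Nat.eqb j n then (if in_q n k then y (k - n - 1)%nat else 0) else 0).
Proof.
  unfold Evec. destruct (in_q n k) eqn:Hq; case_eqb; simpl; try lia; try lra.
  apply in_q_iff in Hq; lia.
Qed.

Definition Jcoef n (Jm : nat -> nat -> R) (y X : Point) (j : nat) : R :=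
  sumR (dimH n) (fun l => Jm j l * alpha n l y X).

Lemma alpha_Japply n Jm y X j : (j < dimH n)%nat ->
  alpha n j y (Japply n Jm y X) = Jcoef n Jm y X j.
Proof.
  intros Hj. unfold Japply. rewrite alpha_sumR, (sumR_single _ j); auto.
  - rewrite alpha_Evec, Nat.eqb_refl. unfold Jcoef; lra.
  - intros m _ Hm. rewrite alpha_Evec. case_eqb; [lia|lra].
Qed.

Lemma Japply_coord n Jm y X k : (k < dimH n)%nat ->
  Japply n Jm y X k =
  Jcoef n Jm y X k + (if in_q n k then y (k - n - 1)%nat * Jcoef n Jm y X n else 0).
Proof.
  intros Hk. unfold Japply.
  transitivity (sumR (dimH n) (fun j =>
      (if Nat.eqb j k then Jcoef n Jm y X j else 0) +
      (if Nat.eqb j n then (if in_q n k then y (k - n - 1)%nat * Jcoef n Jm y X n else 0) else 0))).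
  - apply sumR_ext; intros j Hj. rewrite Evec_split. fold (Jcoef n Jm y X j).
    destruct (in_q n k); case_eqb; subst; lra.
  - rewrite sumR_plus, (sumR_single _ k), (sumR_single _ n), !Nat.eqb_refl;
      try (unfold dimH; lia); try lra; intros; case_eqb; lia || lra.
Qed.

(** [Evec n n y = d_r + sum_i y_i d_(q_i)]; [qsum] pairs the second part with [F]. *)
Definition qsum n (y : Point) (F : nat -> R) : R :=
  sumR (dimH n) (fun k => if in_q n k then y (k - n - 1)%nat * F k else 0).

Lemma qsum_ext n y F G : (forall k, (k < dimH n)%nat -> F k = G k) -> qsum n y F = qsum n y G.
Proof. intros H. apply sumR_ext; intros k Hk. rewrite H by auto. reflexivity. Qed.

Lemma qsum_sumR n y M C W :
  qsum n y (fun k => sumR M (fun m => C m * W m k)) = sumR M (fun m => C m * qsum n y (W m)).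
Proof.
  unfold qsum.
  transitivity (sumR (dimH n) (fun k => sumR M (fun m =>
    C m * (if in_q n k then y (k - n - 1)%nat * W m k else 0)))).
  - apply sumR_ext; intros k _. destruct (in_q n k).
    + rewrite <- sumR_scal_l. apply sumR_ext; intros; ring.
    + symmetry; apply sumR_zero; intros; ring.
  - rewrite sumR_swap. apply sumR_ext; intros m _. apply sumR_scal_l.
Qed.

Lemma Evec_sumR_p n y a F : (a < n)%nat -> sumR (dimH n) (fun k => Evec n a y k * F k) = F a.
Proof.
  intros Ha. rewrite (sumR_single _ a).
  - rewrite Evec_split, Nat.eqb_refl. case_eqb; [lia|lra].
  - unfold dimH; lia.
  - intros j _ Hj. rewrite Evec_split. case_eqb; try lia. lra.
Qed.

Lemma Evec_sumR_r n y F : sumR (dimH n) (fun k => Evec n n y k * F k) = F n + qsum n y F.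
Proof.
  unfold qsum.
  transitivity (sumR (dimH n) (fun k =>
    (if Nat.eqb k n then F k else 0) + (if in_q n k then y (k - n - 1)%nat * F k else 0))).
  - apply sumR_ext; intros k Hk. rewrite Evec_split, Nat.eqb_refl.
    destruct (Nat.eqb_spec k n) as [->|]; case_eqb; try lia.
    + rewrite (in_q_false n n) by lia. lra.
    + destruct (in_q n k); lra.
  - rewrite sumR_plus, (sumR_single _ n), Nat.eqb_refl; auto.
    + unfold dimH; lia.
    + intros j _ Hj. case_eqb; [lia|lra].
Qed.

Definition origin : Point := fun _ => 0.

Lemma alpha_origin n j X : alpha n j origin X = X j.
Proof. unfold alpha, origin. destruct (in_q n j); lra. Qed.

Lemma Japply_origin n Jm X k : (k < dimH n)%nat ->
  Japply n Jm origin X k = sumR (dimH n) (fun l => Jm k l * X l).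
Proof.
  intros Hk. rewrite Japply_coord by auto. unfold Jcoef, origin.
  rewrite Rmult_0_l. destruct (in_q n k); rewrite ?Rplus_0_r;
    apply sumR_ext; intros; fold origin; rewrite alpha_origin; reflexivity.
Qed.

Lemma gmet_origin n X Y : gmet n origin X Y = sumR (dimH n) (fun j => X j * Y j).
Proof. unfold gmet. apply sumR_ext; intros; rewrite !alpha_origin; auto. Qed.

Section Orthogonal.
Variables (n : nat) (Jm : nat -> nat -> R).
Hypothesis Hac : almost_complex n Jm.
Hypothesis Hcomp : compatible n Jm.

Lemma J_sq k l : (k < dimH n)%nat -> (l < dimH n)%nat ->
  sumR (dimH n) (fun m => Jm k m * Jm m l) = - (if Nat.eqb k l then 1 else 0).
Proof.
  intros Hk Hl. pose proof (Hac origin (ecoord l) k Hk) as H.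
  rewrite Japply_origin in H by auto. unfold ecoord at 2 in H. rewrite <- H.
  apply sumR_ext; intros m Hm. rewrite Japply_origin, sumR_ecoord_r by auto. reflexivity.
Qed.

Lemma J_col_norm a : (a < dimH n)%nat -> sumR (dimH n) (fun j => Jm j a * Jm j a) = 1.
Proof.
  intros Ha. pose proof (Hcomp origin (ecoord a) (ecoord a)) as H.
  rewrite !gmet_origin, sumR_ecoord_l in H by auto.
  replace (ecoord a a) with 1 in H by (unfold ecoord; rewrite Nat.eqb_refl; reflexivity).
  rewrite <- H.
  apply sumR_ext; intros j Hj. rewrite Japply_origin, sumR_ecoord_r by auto. reflexivity.
Qed.

(** [g(X, JY) = g(JX, J^2 Y) = - g(JX, Y)] *)
Lemma J_skew a b : (a < dimH n)%nat -> (b < dimH n)%nat -> Jm a b = - Jm b a.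
Proof.
  intros Ha Hb. pose proof (Hcomp origin (ecoord a) (Japply n Jm origin (ecoord b))) as H.
  rewrite !gmet_origin, sumR_ecoord_l, Japply_origin, sumR_ecoord_r in H by auto.
  rewrite <- H, <- (sumR_ecoord_r (dimH n) b (fun j => Jm j a)), <- sumR_opp by auto.
  apply sumR_ext; intros j Hj. rewrite (Hac origin (ecoord b) j Hj), Japply_origin,
    sumR_ecoord_r by auto. lra.
Qed.

End Orthogonal.

(** The right-hand columns carry all their mass in the upper-right block, which by
    skewness is the mass of the lower-left block; this exhausts the mass of the left-hand
    columns. *)
Lemma skew_block_zero K (A : nat -> nat -> R) :
  (forall a b, (a < K + K)%nat -> (b < K + K)%nat -> A a b = - A b a) ->
  (forall a, (a < K + K)%nat -> sumR (K + K) (fun j => A j a * A j a) = 1) ->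
  (forall a b, (K <= a < K + K)%nat -> (K <= b < K + K)%nat -> A a b = 0) ->
  forall a b, (a < K)%nat -> (b < K)%nat -> A a b = 0.
Proof.
  intros Hskew Hnorm Hzero a b Ha Hb.
  set (upper c := sumR K (fun j => A j c * A j c)).
  set (lower c := sumR K (fun j => A (K + j)%nat c * A (K + j)%nat c)).
  assert (Hcol : forall c, (c < K + K)%nat -> upper c + lower c = 1).
  { intros c Hc. rewrite <- (Hnorm c Hc), sumR_split. reflexivity. }
  assert (Hright : forall c, (c < K)%nat -> upper (K + c)%nat = 1).
  { intros c Hc. rewrite <- (Hcol (K + c)%nat) by lia. unfold lower.
    rewrite sumR_zero; [lra|]. intros j Hj. rewrite Hzero by lia. lra. }
  assert (Hleft_lower : sumR K lower = INR K).
  { unfold lower. rewrite sumR_swap, <- (Rmult_1_r (INR K)), <- sumR_const.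
    apply sumR_ext; intros c Hc. rewrite <- (Hright c Hc). apply sumR_ext; intros j Hj.
    rewrite (Hskew (K + c)%nat j) by lia. lra. }
  assert (Hleft_upper : sumR K upper = 0).
  { assert (H : sumR K (fun c => upper c + lower c) = INR K * 1).
    { rewrite <- sumR_const. apply sumR_ext; intros; apply Hcol; lia. }
    rewrite sumR_plus, Hleft_lower in H. lra. }
  assert (Hsq : forall c, 0 <= upper c).
  { intros c. apply sumR_nonneg; intros. apply Rle_0_sqr. }
  pose proof (sumR_nonneg_eq0 K upper (fun c _ => Hsq c) Hleft_upper b Hb) as Hb0.
  pose proof (sumR_nonneg_eq0 K _ (fun j _ => Rle_0_sqr (A j b)) Hb0 a Ha) as Hab.
  apply Rmult_integral in Hab. tauto.
Qed.

Lemma alpha_local n j y y' X : (forall i, (i < n)%nat -> y i = y' i) ->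
  alpha n j y X = alpha n j y' X.
Proof.
  intros H. unfold alpha. destruct (in_q n j) eqn:Hq; auto.
  apply in_q_iff in Hq. rewrite H by lia. reflexivity.
Qed.

Lemma Japply_local n Jm y y' X : (forall i, (i < n)%nat -> y i = y' i) ->
  Japply n Jm y X = Japply n Jm y' X.
Proof.
  intros H. apply functional_extensionality; intros k. unfold Japply.
  apply sumR_ext; intros j _. f_equal.
  - apply sumR_ext; intros l _. rewrite (alpha_local n l y y') by auto. reflexivity.
  - unfold Evec. destruct (in_q n k) eqn:Hq; rewrite ?Bool.andb_false_r; auto.
    apply in_q_iff in Hq. rewrite H by lia. reflexivity.
Qed.

Lemma Fcoord_local n Jm y y' a b : (forall i, (i < n)%nat -> y i = y' i) ->
  Fcoord n Jm y a b = Fcoord n Jm y' a b.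
Proof.
  intros H. unfold Fcoord, gmet. rewrite (Japply_local n Jm y y') by auto.
  apply sumR_ext; intros j _. rewrite !(alpha_local n j y y') by auto. reflexivity.
Qed.

Lemma derivable_pt_lim_affine c d x : derivable_pt_lim (fun t => c + t * d) x d.
Proof.
  intros e He. exists (mkposreal 1 Rlt_0_1). intros h Hh _.
  replace ((c + (x + h) * d - (c + x * d)) / h - d) with 0 by (field; auto).
  rewrite Rabs_R0; lra.
Qed.

(** Along [p_i], [F(d_r, d_b)] varies linearly, with slope [- Jm b (q_i)]: this is the
    term [- x_i dx_r] of [alpha_(q_i)]. *)
Lemma Fcoord_shift_p n Jm i b t : (i < n)%nat -> (n + 1 <= b < dimH n)%nat ->
  Fcoord n Jm (shift origin i t) n b = Jm b n + t * - Jm b (n + 1 + i)%nat.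
Proof.
  intros Hi Hb. unfold Fcoord, gmet. set (y := shift origin i t).
  transitivity (sumR (dimH n) (fun j => alpha n j y (Japply n Jm y (ecoord n)) * ecoord b j)).
  - apply sumR_ext; intros j Hj. f_equal. unfold alpha.
    destruct (in_q n j); auto. unfold ecoord at 2. destruct (Nat.eqb_spec n b); [lia|lra].
  - rewrite sumR_ecoord_r, alpha_Japply by lia. unfold Jcoef.
    transitivity (sumR (dimH n) (fun l => Jm b l * ecoord n l +
        - (if Nat.eqb l (n + 1 + i) then t * Jm b (n + 1 + i)%nat else 0))).
    + apply sumR_ext; intros l Hl. unfold alpha, y, shift, origin, ecoord.
      destruct (in_q n l) eqn:Hq.
      * apply in_q_iff in Hq. rewrite Nat.eqb_refl.
        case_eqb; try lia; [subst l; lra | lra].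
      * destruct (Nat.eqb_spec l (n + 1 + i)); [|lra].
        subst l. rewrite (proj2 (in_q_iff n (n + 1 + i))) in Hq by lia. discriminate.
    + rewrite sumR_plus, sumR_opp, sumR_ecoord_r, (sumR_single _ (n + 1 + i)), Nat.eqb_refl;
        try (unfold dimH; lia); [lra|].
      intros j _ Hj. destruct (Nat.eqb_spec j (n + 1 + i)); [lia|lra].
Qed.

(** [dF(d_(p_i), d_r, d_b) = 0]: the two other terms are derivatives along [r] and [b],
    which [F] does not depend on. *)
Lemma J_q_col_in_V n Jm : symplectic n Jm ->
  forall i b, (i < n)%nat -> (n + 1 <= b < dimH n)%nat -> Jm b (n + 1 + i)%nat = 0.
Proof.
  intros Hsym i b Hi Hb.
  destruct (Hsym origin i n b ltac:(unfold dimH; lia) ltac:(unfold dimH; lia) ltac:(lia))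
    as [L1 [L2 [L3 [H1 [H2 [H3 Hsum]]]]]].
  assert (E1 : L1 = - Jm b (n + 1 + i)%nat).
  { apply (uniqueness_limite (fun t => Jm b n + t * - Jm b (n + 1 + i)%nat) 0);
      [|apply derivable_pt_lim_affine].
    eapply derivable_pt_lim_ext; [|exact H1]. intros t; apply Fcoord_shift_p; auto. }
  assert (Hconst : forall k a c t, (n <= k)%nat ->
    Fcoord n Jm (shift origin k t) a c = Fcoord n Jm origin a c).
  { intros k a c t Hk. apply Fcoord_local. intros j Hj. unfold shift.
    destruct (Nat.eqb_spec j k); [lia|reflexivity]. }
  assert (E2 : L2 = 0).
  { apply (uniqueness_limite (fun _ => Fcoord n Jm origin b i) 0);
      [|apply derivable_pt_lim_const].
    eapply derivable_pt_lim_ext; [|exact H2]. intros t; apply Hconst; lia. }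
  assert (E3 : L3 = 0).
  { apply (uniqueness_limite (fun _ => Fcoord n Jm origin i n) 0);
      [|apply derivable_pt_lim_const].
    eapply derivable_pt_lim_ext; [|exact H3]. intros t; apply Hconst; lia. }
  lra.
Qed.

Section Blocks.
Variables (n : nat) (Jm : nat -> nat -> R).
Hypothesis Hac : almost_complex n Jm.
Hypothesis Hcomp : compatible n Jm.
Hypothesis Hsym : symplectic n Jm.

Lemma J_qs_block a b : (n + 1 <= a < dimH n)%nat -> (n + 1 <= b < dimH n)%nat -> Jm a b = 0.
Proof.
  intros Ha Hb.
  destruct (Nat.lt_ge_cases b (2 * n + 1)).
  { replace b with (n + 1 + (b - n - 1))%nat by lia. apply (J_q_col_in_V n Jm Hsym); lia. }
  destruct (Nat.lt_ge_cases a (2 * n + 1)).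
  - rewrite (J_skew n Jm Hac Hcomp) by lia.
    replace a with (n + 1 + (a - n - 1))%nat by lia. rewrite (J_q_col_in_V n Jm Hsym) by lia. lra.
  - replace b with a by (unfold dimH in *; lia).
    pose proof (J_skew n Jm Hac Hcomp a a ltac:(lia) ltac:(lia)). lra.
Qed.

Lemma J_pr_block a b : (a < n + 1)%nat -> (b < n + 1)%nat -> Jm a b = 0.
Proof.
  assert (EN : dimH n = (n + 1 + (n + 1))%nat) by (unfold dimH; lia).
  apply skew_block_zero; rewrite <- EN.
  - apply J_skew; auto.
  - apply J_col_norm; auto.
  - intros; apply J_qs_block; lia.
Qed.

End Blocks.

Lemma shift_0 x m : shift x m 0 = x.
Proof.
  apply functional_extensionality; intros k; unfold shift.
  destruct (Nat.eqb_spec k m); [subst; lra | reflexivity].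
Qed.

Lemma in_ball_center N x eps : eps > 0 -> ball N x eps x.
Proof. intros He k Hk. rewrite Rminus_diag, Rabs_R0; lra. Qed.

Lemma ball_shift N x eps m t : eps > 0 -> Rabs t < eps -> ball N x eps (shift x m t).
Proof.
  intros He Ht k Hk. unfold shift. destruct (Nat.eqb_spec k m).
  - replace (x k + t - x k) with t by ring; auto.
  - rewrite Rminus_diag, Rabs_R0; lra.
Qed.

Lemma ball_shift2 N x eps a b z t : a <> b -> eps > 0 -> Rabs z < eps -> Rabs t < eps ->
  ball N x eps (shift (shift x a z) b t).
Proof.
  intros Hab He Hz Ht k Hk. unfold shift.
  destruct (Nat.eqb_spec k b), (Nat.eqb_spec k a); subst; try lia.
  - replace (x b + t - x b) with t by ring; auto.
  - replace (x a + z - x a) with z by ring; auto.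
  - rewrite Rminus_diag, Rabs_R0; lra.
Qed.

Lemma derivable_pt_lim_sumR M (F : nat -> R -> R) L x :
  (forall k, (k < M)%nat -> derivable_pt_lim (F k) x (L k)) ->
  derivable_pt_lim (fun t => sumR M (fun k => F k t)) x (sumR M L).
Proof.
  induction M as [|M IH]; intros H; simpl.
  - apply derivable_pt_lim_const.
  - apply (derivable_pt_lim_plus (fun t => sumR M (fun k => F k t)) (F M)).
    + apply IH; intros; apply H; lia.
    + apply H; lia.
Qed.

Lemma derivable_pt_lim_shift_coord x m j :
  derivable_pt_lim (fun t => shift x m t j) 0 (if Nat.eqb j m then 1 else 0).
Proof.
  unfold shift. destruct (Nat.eqb_spec j m).
  - apply (derivable_pt_lim_ext (fun t => x j + t * 1)); [intros; ring|].
    apply derivable_pt_lim_affine.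
  - apply derivable_pt_lim_const.
Qed.

Lemma partial_unique_on_ball N x eps m (G1 G2 : Point -> R) L1 L2 : eps > 0 ->
  (forall y, ball N x eps y -> G1 y = G2 y) ->
  derivable_pt_lim (fun t => G1 (shift x m t)) 0 L1 ->
  derivable_pt_lim (fun t => G2 (shift x m t)) 0 L2 -> L1 = L2.
Proof.
  intros He HG D1 D2. apply (uniqueness_limite (fun t => G2 (shift x m t)) 0); auto.
  intros e Hee. destruct (D1 e Hee) as [d Hd].
  assert (Hp : 0 < Rmin d eps) by (apply Rmin_glb_lt; [apply cond_pos|lra]).
  exists (mkposreal _ Hp). intros h Hh Hh2. simpl in Hh2.
  pose proof (Rmin_l d eps). pose proof (Rmin_r d eps).
  rewrite <- !HG by (apply ball_shift; [lra | rewrite ?Rplus_0_l, ?Rabs_R0; lra]).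
  apply Hd; auto; lra.
Qed.

Lemma derivable_pt_lim_along (g : Point -> R) (phi : R -> Point) t0 k L :
  (forall h, phi (t0 + h) = shift (phi t0) k h) ->
  derivable_pt_lim (fun h => g (shift (phi t0) k h)) 0 L ->
  derivable_pt_lim (fun t => g (phi t)) t0 L.
Proof.
  intros Hphi H e He. destruct (H e He) as [d Hd]. exists d. intros h Hh Hh2.
  specialize (Hd h Hh Hh2). rewrite Rplus_0_l, shift_0 in Hd. rewrite Hphi. exact Hd.
Qed.

Section MixedPartials.
Import Coquelicot.Coquelicot.

Lemma mixed_partials_comm (f fa fb fab fba : R -> R -> R) eps : eps > 0 ->
  (forall u v, Rabs u < eps -> Rabs v < eps ->
     derivable_pt_lim (fun z => f z v) u (fa u v) /\
     derivable_pt_lim (fun t => f u t) v (fb u v) /\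
     derivable_pt_lim (fun z => fb z v) u (fab u v) /\
     derivable_pt_lim (fun t => fa u t) v (fba u v)) ->
  continuity_2d_pt fab 0 0 -> continuity_2d_pt fba 0 0 ->
  fab 0 0 = fba 0 0.
Proof.
  intros He Hder Cab Cba.
  assert (near : forall w (P : R -> Prop), Rabs w < eps ->
    (forall z, Rabs z < eps -> P z) -> locally w P).
  { intros w P Hw HP. assert (Hp : 0 < eps - Rabs w) by lra. exists (mkposreal _ Hp).
    intros z Hz. apply HP. change (Rabs (z - w) < eps - Rabs w) in Hz.
    pose proof (Rabs_triang (z - w) w) as T. unfold Rminus in T, Hz.
    rewrite Rplus_assoc, Rplus_opp_l, Rplus_0_r in T. lra. }
  assert (square : forall P : R -> R -> Prop,
    (forall u v, Rabs u < eps -> Rabs v < eps -> P u v) -> locally_2d P 0 0).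
  { intros P HP. exists (mkposreal eps He). intros u v Hu Hv.
    rewrite Rminus_0_r in Hu, Hv. apply HP; assumption. }
  assert (Hab : forall u v, Rabs u < eps -> Rabs v < eps ->
    is_derive (fun z => Derive (fun t => f z t) v) u (fab u v)).
  { intros u v Hu Hv. apply (is_derive_ext_loc (fun z => fb z v)).
    - apply near; auto. intros z Hz. symmetry. apply is_derive_unique, is_derive_Reals.
      apply Hder; auto.
    - apply is_derive_Reals, Hder; auto. }
  assert (Hba : forall u v, Rabs u < eps -> Rabs v < eps ->
    is_derive (fun z => Derive (fun t => f t z) u) v (fba u v)).
  { intros u v Hu Hv. apply (is_derive_ext_loc (fun z => fa u z)).
    - apply near; auto. intros z Hz. symmetry. apply is_derive_unique, is_derive_Reals.
      apply Hder; auto.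
    - apply is_derive_Reals, Hder; auto. }
  assert (DAB : forall u v, Rabs u < eps -> Rabs v < eps ->
    Derive (fun z : R => Derive (fun t : R => f z t) v) u = fab u v)
    by (intros; apply is_derive_unique, Hab; auto).
  assert (DBA : forall u v, Rabs u < eps -> Rabs v < eps ->
    Derive (fun z : R => Derive (fun t : R => f t z) u) v = fba u v)
    by (intros; apply is_derive_unique, Hba; auto).
  assert (H0 : Rabs 0 < eps) by (rewrite Rabs_R0; lra).
  rewrite <- (DAB 0 0 H0 H0), <- (DBA 0 0 H0 H0).
  apply Schwarz.
  - apply square. intros u v Hu Hv.
    repeat split; eexists;
      [apply is_derive_Reals, Hder | apply is_derive_Reals, Hder | apply Hab | apply Hba]; auto.
  - apply (continuity_2d_pt_ext_loc fab); [|assumption].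
    apply square. intros; symmetry; auto.
  - apply (continuity_2d_pt_ext_loc fba); [|assumption].
    apply square. intros; symmetry; auto.
Qed.

Lemma smooth_on_continuity_2d N x eps f D l a b : eps > 0 ->
  smooth_on N (Defs.ball N x eps) f D -> a <> b ->
  continuity_2d_pt (fun z t => D l (shift (shift x a z) b t)) 0 0.
Proof.
  intros Heps [_ [_ Hc]] Hab e.
  destruct (Hc l x (in_ball_center N x eps Heps) e (cond_pos e)) as [d [Hd Hclose]].
  assert (Hm : 0 < Rmin eps d) by (apply Rmin_glb_lt; lra).
  pose proof (Rmin_l eps d). pose proof (Rmin_r eps d).
  exists (mkposreal _ Hm). intros u v Hu Hv. simpl in Hu, Hv. rewrite Rminus_0_r in Hu, Hv.
  rewrite !shift_0. apply Hclose; apply ball_shift2; auto; lra.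
Qed.

End MixedPartials.

Lemma smooth_on_partials_comm N x eps f D a b : eps > 0 ->
  smooth_on N (ball N x eps) f D -> (a < N)%nat -> (b < N)%nat ->
  D (a :: b :: nil) x = D (b :: a :: nil) x.
Proof.
  intros Heps Hf Ha Hb. pose proof Hf as [_ [Hd _]].
  destruct (Nat.eq_dec a b) as [<-|Hab]; [reflexivity|].
  set (pt z t := shift (shift x a z) b t).
  assert (ptb : forall z t h, pt z (t + h) = shift (pt z t) b h).
  { intros z t h. apply functional_extensionality; intros k. unfold pt, shift.
    destruct (Nat.eqb_spec k b); ring. }
  assert (pta : forall z t h, pt (z + h) t = shift (pt z t) a h).
  { intros z t h. apply functional_extensionality; intros k. unfold pt, shift.
    destruct (Nat.eqb_spec k b), (Nat.eqb_spec k a); try subst k; try lia; ring. }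
  replace x with (pt 0 0) by (unfold pt; rewrite !shift_0; reflexivity).
  apply (mixed_partials_comm (fun z t => D nil (pt z t)) (fun z t => D (a :: nil) (pt z t))
    (fun z t => D (b :: nil) (pt z t)) (fun z t => D (a :: b :: nil) (pt z t))
    (fun z t => D (b :: a :: nil) (pt z t)) eps Heps);
    [| apply (smooth_on_continuity_2d N x eps f D) ..]; auto.
  intros u v Hu Hv.
  assert (Hin : ball N x eps (pt u v)) by (apply ball_shift2; auto).
  repeat split;
    [apply (derivable_pt_lim_along _ (fun z => pt z v) u a) |
     apply (derivable_pt_lim_along _ (fun t => pt u t) v b) |
     apply (derivable_pt_lim_along _ (fun z => pt z v) u a) |
     apply (derivable_pt_lim_along _ (fun t => pt u t) v b)]; auto.
Qed.

(** Partial derivative of [Evec n a y k] along [x_m]; only [Evec n n] depends on [y]. *)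
Definition dEvec n a m k : R :=
  if (Nat.eqb a n && in_q n k && Nat.eqb (k - n - 1) m)%bool then 1 else 0.

Lemma derivable_pt_lim_Evec n a x m k :
  derivable_pt_lim (fun t => Evec n a (shift x m t) k) 0 (dEvec n a m k).
Proof.
  unfold Evec, dEvec. destruct (Nat.eqb k a) eqn:Eka.
  - apply Nat.eqb_eq in Eka. subst k.
    match goal with |- derivable_pt_lim _ _ ?l => replace l with 0 end;
      [apply derivable_pt_lim_const|].
    destruct (Nat.eqb_spec a n) as [->|]; simpl; [rewrite (in_q_false n n) by lia|];
      reflexivity.
  - destruct (Nat.eqb a n && in_q n k)%bool; simpl;
      [apply derivable_pt_lim_shift_coord | apply derivable_pt_lim_const].
Qed.

Lemma dEvec_sumR_p n a m F : (a < n)%nat -> sumR (dimH n) (fun k => dEvec n a m k * F k) = 0.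
Proof.
  intros Ha. apply sumR_zero; intros k _. unfold dEvec.
  destruct (Nat.eqb_spec a n); [lia|]. simpl. lra.
Qed.

Lemma dEvec_sumR_r n m F :
  sumR (dimH n) (fun k => dEvec n n m k * F k) = if Nat.ltb m n then F (n + 1 + m)%nat else 0.
Proof.
  unfold dEvec. rewrite Nat.eqb_refl. simpl. destruct (Nat.ltb_spec m n).
  - rewrite (sumR_single _ (n + 1 + m)).
    + rewrite (proj2 (in_q_iff n (n + 1 + m))) by lia. simpl. case_eqb; [lra|lia].
    + unfold dimH; lia.
    + intros k _ Hk. destruct (in_q n k) eqn:Hq; simpl; [|lra].
      apply in_q_iff in Hq. case_eqb; [lia|lra].
  - apply sumR_zero; intros k _. destruct (in_q n k) eqn:Hq; simpl; [|lra].
    apply in_q_iff in Hq. case_eqb; [lia|lra].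
Qed.

Lemma frame_identity_deriv n Jm x eps g h Dg Dh c a m :
  eps > 0 -> smooth_on (dimH n) (ball (dimH n) x eps) g Dg ->
  smooth_on (dimH n) (ball (dimH n) x eps) h Dh -> (m < dimH n)%nat ->
  (forall y, ball (dimH n) x eps y ->
     sumR (dimH n) (fun k => Jm k a * Dg (k :: nil) y) =
     c * sumR (dimH n) (fun k => Evec n a y k * Dh (k :: nil) y)) ->
  sumR (dimH n) (fun k => Jm k a * Dg (m :: k :: nil) x) =
  c * sumR (dimH n) (fun k => dEvec n a m k * Dh (k :: nil) x + Evec n a x k * Dh (m :: k :: nil) x).
Proof.
  intros He [_ [Hg _]] [_ [Hh _]] Hm Hid.
  pose proof (in_ball_center (dimH n) x eps He) as Hx.
  eapply (partial_unique_on_ball (dimH n) x eps m); [exact He | exact Hid | |].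
  - apply derivable_pt_lim_sumR; intros k Hk.
    apply derivable_pt_lim_scal, Hg; auto.
  - apply derivable_pt_lim_scal, derivable_pt_lim_sumR; intros k Hk.
    pose proof (derivable_pt_lim_mult _ _ 0 _ _ (derivable_pt_lim_Evec n a x m k)
      (Hh (k :: nil) x m Hx Hm)) as Hd.
    cbv beta in Hd. rewrite !shift_0 in Hd. exact Hd.
Qed.

Section Holomorphic.
Variables (n : nat) (Jm : nat -> nat -> R).
Hypothesis Hpr : forall a b, (a < n + 1)%nat -> (b < n + 1)%nat -> Jm a b = 0.

Lemma Japply_Evec y a k : (a < n + 1)%nat -> (k < dimH n)%nat ->
  Japply n Jm y (Evec n a y) k = Jm k a.
Proof.
  intros Ha Hk.
  assert (HJ : forall j, Jcoef n Jm y (Evec n a y) j = Jm j a).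
  { intros j. unfold Jcoef. rewrite (sumR_single _ a).
    - rewrite alpha_Evec, Nat.eqb_refl. ring.
    - unfold dimH; lia.
    - intros l _ Hl. rewrite alpha_Evec. case_eqb; [lia|ring]. }
  rewrite Japply_coord, !HJ, (Hpr n a) by lia. destruct (in_q n k); ring.
Qed.

(** The Cauchy-Riemann equations [du(J E_a) = - dv(E_a)], [dv(J E_a) = du(E_a)] for
    [a < n + 1], where [J E_a] has constant coordinates since it lies in [Z]. *)
Lemma holomorphic_frame U u v Du Dv y a :
  holomorphic_on n Jm U u v Du Dv -> U y -> (a < n + 1)%nat ->
  sumR (dimH n) (fun k => Jm k a * Du (k :: nil) y) =
    - sumR (dimH n) (fun k => Evec n a y k * Dv (k :: nil) y) /\
  sumR (dimH n) (fun k => Jm k a * Dv (k :: nil) y) =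
    sumR (dimH n) (fun k => Evec n a y k * Du (k :: nil) y).
Proof.
  intros [_ [_ H]] Hy Ha. destruct (H y (Evec n a y) Hy) as [E1 E2]. unfold dif in E1, E2.
  split; [rewrite <- E1 | rewrite <- E2];
    apply sumR_ext; intros k Hk; rewrite Japply_Evec by auto; ring.
Qed.

(** [U1], [U2] (resp. [V1], [V2]) stand for the first and second partial derivatives of
    [u] (resp. [v]) at [x], and [HU], [HV] for the derivatives of the Cauchy-Riemann
    equations [holomorphic_frame]. *)
Section SecondOrder.
Variable x : Point.
Variables (U1 V1 : nat -> R) (U2 V2 : nat -> nat -> R).
Hypothesis U2_sym : forall m k, (m < dimH n)%nat -> (k < dimH n)%nat -> U2 m k = U2 k m.
Hypothesis V2_sym : forall m k, (m < dimH n)%nat -> (k < dimH n)%nat -> V2 m k = V2 k m.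
Hypothesis HU : forall a m, (a < n + 1)%nat -> (m < dimH n)%nat ->
  sumR (dimH n) (fun k => Jm k a * U2 m k) =
  - sumR (dimH n) (fun k => dEvec n a m k * V1 k + Evec n a x k * V2 m k).
Hypothesis HV : forall a m, (a < n + 1)%nat -> (m < dimH n)%nat ->
  sumR (dimH n) (fun k => Jm k a * V2 m k) =
  sumR (dimH n) (fun k => dEvec n a m k * U1 k + Evec n a x k * U2 m k).

Let HU_p a m : (a < n)%nat -> (m < dimH n)%nat ->
  sumR (dimH n) (fun k => Jm k a * U2 m k) = - V2 m a.
Proof.
  intros Ha Hm. rewrite HU, sumR_plus, dEvec_sumR_p, Evec_sumR_p by lia. ring.
Qed.

Let HV_p a m : (a < n)%nat -> (m < dimH n)%nat ->
  sumR (dimH n) (fun k => Jm k a * V2 m k) = U2 m a.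
Proof.
  intros Ha Hm. rewrite HV, sumR_plus, dEvec_sumR_p, Evec_sumR_p by lia. ring.
Qed.

(** [V1 (q_i)] is [[E_(p_i), E_r] v]. Rewriting both second derivatives
    with the Cauchy-Riemann equations turns each into the same double sum [P], because the
    [J E_a] have constant coefficients. *)
Lemma second_order_q_zero i : (i < n)%nat -> V1 (n + 1 + i)%nat = 0.
Proof.
  intros Hi.
  set (N := dimH n).
  assert (HiN : (i < N)%nat) by (unfold N, dimH; lia).
  set (P := sumR N (fun k => sumR N (fun k' => Jm k n * Jm k' i * V2 k k'))).
  assert (Hr : sumR N (fun k => Jm k n * U2 i k) =
               - (V1 (n + 1 + i)%nat + (V2 i n + qsum n x (V2 i)))).
  { unfold N. rewrite HU, sumR_plus, dEvec_sumR_r, Evec_sumR_r by lia.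
    destruct (Nat.ltb_spec i n); [reflexivity|lia]. }
  assert (HP1 : sumR N (fun k => Jm k n * U2 i k) = P).
  { apply sumR_ext; intros k Hk. rewrite U2_sym, <- (HV_p i k), <- sumR_scal_l by auto.
    apply sumR_ext; intros; ring. }
  assert (HP2 : V2 i n + qsum n x (V2 i) = - P).
  { assert (Hcol : forall k', (k' < N)%nat ->
      Jm k' i * (U2 k' n + qsum n x (U2 k')) =
      Jm k' i * sumR N (fun k => Jm k n * V2 k' k)).
    { intros k' Hk'. destruct (Nat.lt_ge_cases k' (n + 1)).
      - rewrite Hpr by lia. ring.
      - unfold N. rewrite HV, sumR_plus, dEvec_sumR_r, Evec_sumR_r by lia.
        destruct (Nat.ltb_spec k' n); [lia|]. rewrite Rplus_0_l. reflexivity. }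
    transitivity (- sumR N (fun k' => Jm k' i * (U2 k' n + qsum n x (U2 k')))).
    - assert (HV2 : forall k, (k < N)%nat ->
        V2 i k = sumR N (fun k' => - Jm k' i * U2 k' k)).
      { intros k Hk. rewrite V2_sym, <- (Ropp_involutive (V2 k i)), <- HU_p, <- sumR_opp by auto.
        apply sumR_ext; intros k' Hk'. rewrite U2_sym by auto. ring. }
      rewrite HV2 by (unfold N, dimH; lia).
      rewrite (qsum_ext n x _ (fun k => sumR N (fun k' => - Jm k' i * U2 k' k))) by auto.
      unfold N. rewrite qsum_sumR, <- sumR_plus, <- sumR_opp.
      apply sumR_ext; intros; ring.
    - rewrite (sumR_ext _ _ _ Hcol). unfold P. rewrite sumR_swap.
      apply f_equal. apply sumR_ext; intros k Hk. rewrite <- sumR_scal_l.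
      apply sumR_ext; intros k' Hk'. rewrite (V2_sym k' k) by auto. ring. }
  lra.
Qed.

End SecondOrder.

Lemma holomorphic_partial_q_zero x eps u v Du Dv i : eps > 0 ->
  holomorphic_on n Jm (ball (dimH n) x eps) u v Du Dv -> (i < n)%nat ->
  Du ((n + 1 + i)%nat :: nil) x = 0 /\ Dv ((n + 1 + i)%nat :: nil) x = 0.
Proof.
  intros He Hh Hi. pose proof Hh as [Su [Sv _]].
  assert (Ucomm : forall m k, (m < dimH n)%nat -> (k < dimH n)%nat ->
    Du (m :: k :: nil) x = Du (k :: m :: nil) x).
  { intros; eapply smooth_on_partials_comm; eauto. }
  assert (Vcomm : forall m k, (m < dimH n)%nat -> (k < dimH n)%nat ->
    Dv (m :: k :: nil) x = Dv (k :: m :: nil) x).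
  { intros; eapply smooth_on_partials_comm; eauto. }
  assert (HU : forall a m, (a < n + 1)%nat -> (m < dimH n)%nat ->
    sumR (dimH n) (fun k => Jm k a * Du (m :: k :: nil) x) =
    - sumR (dimH n) (fun k => dEvec n a m k * Dv (k :: nil) x + Evec n a x k * Dv (m :: k :: nil) x)).
  { intros a m Ha Hm. rewrite (frame_identity_deriv n Jm x eps u v Du Dv (-1)); auto; [ring|].
    intros y Hy. rewrite (proj1 (holomorphic_frame _ u v Du Dv y a Hh Hy Ha)). ring. }
  assert (HV : forall a m, (a < n + 1)%nat -> (m < dimH n)%nat ->
    sumR (dimH n) (fun k => Jm k a * Dv (m :: k :: nil) x) =
    sumR (dimH n) (fun k => dEvec n a m k * Du (k :: nil) x + Evec n a x k * Du (m :: k :: nil) x)).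
  { intros a m Ha Hm. rewrite (frame_identity_deriv n Jm x eps v u Dv Du 1); auto; [ring|].
    intros y Hy. rewrite (proj2 (holomorphic_frame _ u v Du Dv y a Hh Hy Ha)). ring. }
  split.
  - (* the pair [(v, - u)] satisfies the same equations as [(u, v)] *)
    enough (H : - Du ((n + 1 + i)%nat :: nil) x = 0) by lra.
    apply (second_order_q_zero x (fun k => Dv (k :: nil) x) (fun k => - Du (k :: nil) x)
      (fun m k => Dv (m :: k :: nil) x) (fun m k => - Du (m :: k :: nil) x)); auto.
    + intros m k Hm Hk. rewrite Ucomm by auto. reflexivity.
    + intros a m Ha Hm. rewrite HV, <- sumR_opp by auto. apply sumR_ext; intros; ring.
    + intros a m Ha Hm. rewrite <- (sumR_ext _ (fun k => - (Jm k a * Du (m :: k :: nil) x)))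
        by (intros; ring). rewrite sumR_opp, HU by auto. ring.
  - apply (second_order_q_zero x (fun k => Du (k :: nil) x) (fun k => Dv (k :: nil) x)
      (fun m k => Du (m :: k :: nil) x) (fun m k => Dv (m :: k :: nil) x)); auto.
Qed.

End Holomorphic.

Lemma Evec_sumR_q_zero n y a W : (a < n + 1)%nat ->
  (forall i, (i < n)%nat -> W (n + 1 + i)%nat = 0) ->
  sumR (dimH n) (fun k => Evec n a y k * W k) = W a.
Proof.
  intros Ha HW. destruct (Nat.eq_dec a n) as [->|].
  - rewrite Evec_sumR_r. unfold qsum. rewrite sumR_zero; [ring|].
    intros k _. destruct (in_q n k) eqn:Hq; [|reflexivity].
    apply in_q_iff in Hq. replace k with (n + 1 + (k - n - 1))%nat by lia.
    rewrite HW by lia. ring.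
  - apply Evec_sumR_p; lia.
Qed.

(** [theta_re + i theta_im] is the [(1,0)]-form [alpha_s - i (alpha_s o J)]. *)
Definition theta_re n (X : Point) : R := X (2 * n + 1)%nat.
Definition theta_im n (Jm : nat -> nat -> R) (X : Point) : R :=
  - sumR (dimH n) (fun k => X k * Jm (2 * n + 1)%nat k).

Definition lin N (c : nat -> R) (y : Point) : R := sumR N (fun k => c k * y k).

Definition Dlin N (c : nat -> R) (l : list nat) (y : Point) : R :=
  match l with nil => lin N c y | k :: nil => c k | _ => 0 end.

Lemma lin_shift N c y k t : (k < N)%nat -> lin N c (shift y k t) = lin N c y + t * c k.
Proof.
  intros Hk. unfold lin, shift.
  transitivity (sumR N (fun j => c j * y j + (if Nat.eqb j k then t * c k else 0))).
  - apply sumR_ext; intros j Hj. destruct (Nat.eqb_spec j k) as [->|]; ring.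
  - rewrite sumR_plus, (sumR_single N k (fun j => if Nat.eqb j k then t * c k else 0)); auto.
    + rewrite Nat.eqb_refl. reflexivity.
    + intros j _ Hj. destruct (Nat.eqb_spec j k); [lia|reflexivity].
Qed.

Lemma lin_smooth N U c : smooth_on N U (lin N c) (Dlin N c).
Proof.
  split; [|split].
  - reflexivity.
  - intros [|j [|j' l]] y k Hy Hk; simpl; try apply derivable_pt_lim_const.
    apply (derivable_pt_lim_ext (fun t => lin N c y + t * c k));
      [intros; rewrite lin_shift; auto | apply derivable_pt_lim_affine].
  - intros [|j [|j' l]] y Hy e He; simpl;
      try (exists 1; split; [lra|]; intros; rewrite Rminus_diag, Rabs_R0; lra).
    set (S := sumR N (fun k => Rabs (c k))).
    assert (HS : 0 <= S) by (apply sumR_nonneg; intros; apply Rabs_pos).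
    exists (e / (S + 1)). split; [apply Rdiv_lt_0_compat; lra|]. intros z _ Hz.
    unfold lin. unfold Rminus. rewrite <- sumR_opp, <- sumR_plus.
    rewrite (sumR_ext _ _ (fun k => c k * (z k - y k))) by (intros; ring).
    eapply Rle_lt_trans; [apply sumR_abs_le with (d := e / (S + 1)); intros; left; apply Hz; auto|].
    fold S. apply Rlt_le_trans with ((S + 1) * (e / (S + 1))).
    + assert (0 < e / (S + 1)) by (apply Rdiv_lt_0_compat; lra). nra.
    + right. field. lra.
Qed.

Section Main.
Variables (n : nat) (Jm : nat -> nat -> R).
Hypothesis Hac : almost_complex n Jm.
Hypothesis Hcomp : compatible n Jm.
Hypothesis Hsym : symplectic n Jm.

Let s := (2 * n + 1)%nat.
Let N := dimH n.
Let Hpr := J_pr_block n Jm Hac Hcomp Hsym.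

Lemma s_lt_N : (s < N)%nat.
Proof. unfold s, N, dimH; lia. Qed.

Lemma J_s_qs k : (n + 1 <= k < N)%nat -> Jm s k = 0.
Proof. intros. apply (J_qs_block n Jm Hac Hcomp Hsym); unfold s, N, dimH in *; lia. Qed.

(** For [a] in [V], the column [J E_a] lies in [Z]; against a vector vanishing on the
    [q]-directions only its [s]-component survives. *)
Lemma sumR_J_col_pr a W : (a < n + 1)%nat ->
  (forall i, (i < n)%nat -> W (n + 1 + i)%nat = 0) ->
  sumR N (fun j => Jm j a * W j) = Jm s a * W s.
Proof.
  intros Ha HW. apply (sumR_single N s (fun j => Jm j a * W j)); [apply s_lt_N|].
  intros j Hj Hjs. destruct (Nat.lt_ge_cases j (n + 1)).
  - rewrite Hpr by lia. ring.
  - replace j with (n + 1 + (j - n - 1))%nat by lia. rewrite HW; [ring|].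
    unfold s, N, dimH in *; lia.
Qed.

(** Every holomorphic [f] satisfies [df_x = f_s(x) theta], with the complex number
    [f_s(x) = du(E_s) + i dv(E_s)]. *)
Lemma holomorphic_dif x eps u v Du Dv : eps > 0 ->
  holomorphic_on n Jm (ball N x eps) u v Du Dv ->
  forall X,
    dif N Du x X = Du (s :: nil) x * theta_re n X - Dv (s :: nil) x * theta_im n Jm X /\
    dif N Dv x X = Du (s :: nil) x * theta_im n Jm X + Dv (s :: nil) x * theta_re n X.
Proof.
  intros He Hh X.
  pose proof (in_ball_center N x eps He) as Hx.
  set (p := Du (s :: nil) x). set (q := Dv (s :: nil) x).
  assert (Hq : forall i, (i < n)%nat ->
    Du ((n + 1 + i)%nat :: nil) x = 0 /\ Dv ((n + 1 + i)%nat :: nil) x = 0)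
    by (intros i Hi; exact (holomorphic_partial_q_zero n Jm Hpr x eps u v Du Dv i He Hh Hi)).
  assert (Hcoef : forall k, (k < N)%nat ->
    Du (k :: nil) x = p * ecoord s k + q * Jm s k /\
    Dv (k :: nil) x = q * ecoord s k - p * Jm s k).
  { intros k Hk. unfold ecoord. destruct (Nat.lt_ge_cases k (n + 1)) as [Hkv|Hkz].
    - destruct (Nat.eqb_spec k s); [unfold s in *; lia|].
      destruct (holomorphic_frame n Jm Hpr _ u v Du Dv x k Hh Hx Hkv) as [E1 E2].
      rewrite !Evec_sumR_q_zero, !sumR_J_col_pr in E1, E2
        by (auto; try apply s_lt_N; try (unfold N, dimH; lia); intros; apply Hq; auto).
      unfold p, q. split; lra.
    - destruct (Nat.eqb_spec k s) as [->|Hks].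
      + rewrite (J_s_qs s) by (pose proof s_lt_N; unfold s; lia). fold p q. split; ring.
      + rewrite J_s_qs by lia. replace k with (n + 1 + (k - n - 1))%nat by lia.
        destruct (Hq (k - n - 1)%nat) as [-> ->]; [unfold s, N, dimH in *; lia|]. split; ring. }
  unfold dif, theta_re, theta_im. fold N s. split.
  - transitivity (sumR N (fun k => p * (X k * ecoord s k) + q * (X k * Jm s k))).
    + apply sumR_ext; intros k Hk. rewrite (proj1 (Hcoef k Hk)). ring.
    + rewrite sumR_plus, !sumR_scal_l, sumR_ecoord_r by apply s_lt_N. ring.
  - transitivity (sumR N (fun k => q * (X k * ecoord s k) + - p * (X k * Jm s k))).
    + apply sumR_ext; intros k Hk. rewrite (proj2 (Hcoef k Hk)). ring.
    + rewrite sumR_plus, !sumR_scal_l, sumR_ecoord_r by apply s_lt_N. ring.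
Qed.

Lemma theta_Japply y X :
  theta_re n (Japply n Jm y X) = - theta_im n Jm X /\
  theta_im n Jm (Japply n Jm y X) = theta_re n X.
Proof.
  pose proof s_lt_N as Hs.
  assert (Hqs : in_q n s = false) by (apply in_q_false; unfold s; lia).
  assert (Hcol : forall j, (j < N)%nat -> Jm s j * alpha n j y X = X j * Jm s j).
  { intros j Hj. unfold alpha. destruct (in_q n j) eqn:Hq; [|ring].
    apply in_q_iff in Hq. rewrite J_s_qs by (unfold N, dimH; lia). ring. }
  unfold theta_re, theta_im. fold s N. split.
  - rewrite Japply_coord, Hqs by auto. unfold Jcoef. fold N.
    rewrite Ropp_involutive, Rplus_0_r. apply sumR_ext; auto.
  - transitivity (- sumR N (fun k => Jcoef n Jm y X k * Jm s k)).
    { f_equal. apply sumR_ext; intros k Hk. rewrite Japply_coord by auto.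
      destruct (in_q n k) eqn:Hq; [|ring]. apply in_q_iff in Hq.
      rewrite J_s_qs by (unfold N, dimH; lia). ring. }
    transitivity (- sumR N (fun j => sumR N (fun k => Jm s k * Jm k j) * alpha n j y X)).
    { f_equal. unfold Jcoef. fold N.
      rewrite (sumR_ext N _ (fun k => sumR N (fun j => Jm s k * Jm k j * alpha n j y X)))
        by (intros; rewrite <- sumR_scal_r; apply sumR_ext; intros; ring).
      rewrite sumR_swap. apply sumR_ext; intros. apply sumR_scal_r. }
    rewrite (sumR_ext N _ (fun j => - (if Nat.eqb s j then alpha n j y X else 0)))
      by (intros j Hj; unfold N; rewrite J_sq by auto; destruct (Nat.eqb s j); ring).
    rewrite sumR_opp, Ropp_involutive, (sumR_single N s), Nat.eqb_refl; auto.
    + unfold alpha. rewrite Hqs. reflexivity.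
    + intros j _ Hj. destruct (Nat.eqb_spec s j); [lia|reflexivity].
Qed.

Lemma hol_family_theta x : hol_family n Jm x 1.
Proof.
  pose proof s_lt_N as Hs.
  set (cre := ecoord s). set (cim := fun k => - Jm s k).
  assert (Hre : forall y X, dif N (Dlin N cre) y X = theta_re n X)
    by (intros; apply sumR_ecoord_r; auto).
  assert (Him : forall y X, dif N (Dlin N cim) y X = theta_im n Jm X).
  { intros. unfold dif, theta_im. rewrite <- sumR_opp. apply sumR_ext; intros.
    cbn [Dlin]. unfold cim. fold s. ring. }
  exists 1, (fun _ => lin N cre), (fun _ => lin N cim), (fun _ => Dlin N cre), (fun _ => Dlin N cim).
  split; [lra|split].
  - intros l _. split; [apply lin_smooth|split; [apply lin_smooth|]].
    intros y X _. rewrite !Hre, !Him. destruct (theta_Japply y X). split; auto.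
  - intros a b H l Hl. replace l with 0%nat by lia.
    destruct (H (ecoord s)) as [E1 E2]. simpl in E1, E2.
    rewrite Hre, Him in E1, E2. unfold theta_re, theta_im in E1, E2. fold s N in E1, E2.
    rewrite sumR_ecoord_l in E1, E2 by auto.
    unfold ecoord in E1, E2. rewrite Nat.eqb_refl in E1, E2.
    rewrite (J_s_qs s) in E1, E2 by (unfold s; lia).
    split; lra.
Qed.

(** By [holomorphic_dif], [df_l = w_l theta] with [w_l] complex. The coefficients
    [(w_1, - w_0)] annihilate [(df_0, df_1)], so independence forces [w_0 = 0]; then
    already [(1, 0)] does. *)
Lemma hol_family_le_1 x m : hol_family n Jm x m -> (m <= 1)%nat.
Proof.
  intros [eps [u [v [Du [Dv [He [Hh Hind]]]]]]].
  destruct (Nat.le_gt_cases m 1) as [|Hm]; [assumption|exfalso].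
  set (p l := Du l (s :: nil) x). set (q l := Dv l (s :: nil) x).
  assert (Hdif : forall l, (l < m)%nat -> forall X,
    dif (dimH n) (Du l) x X = p l * theta_re n X - q l * theta_im n Jm X /\
    dif (dimH n) (Dv l) x X = p l * theta_im n Jm X + q l * theta_re n X)
    by (intros l Hl; exact (holomorphic_dif x eps _ _ _ _ He (Hh l Hl))).
  assert (Hcomb : forall a b : nat -> R,
    (forall l, (2 <= l)%nat -> (l < m)%nat -> a l = 0 /\ b l = 0) ->
    a 0%nat * p 0%nat - b 0%nat * q 0%nat + (a 1%nat * p 1%nat - b 1%nat * q 1%nat) = 0 ->
    a 0%nat * q 0%nat + b 0%nat * p 0%nat + (a 1%nat * q 1%nat + b 1%nat * p 1%nat) = 0 ->
    forall l, (l < m)%nat -> a l = 0 /\ b l = 0).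
  { intros a b Hab Hre Him. apply Hind. intros X.
    rewrite !(sumR_first_two m) by (auto; intros l Hl1 Hl2; destruct (Hab l Hl1 Hl2) as [-> ->]; ring).
    destruct (Hdif 0%nat ltac:(lia) X) as [-> ->], (Hdif 1%nat ltac:(lia) X) as [-> ->].
    set (A := a 0%nat * p 0%nat - b 0%nat * q 0%nat + (a 1%nat * p 1%nat - b 1%nat * q 1%nat)) in Hre.
    set (B := a 0%nat * q 0%nat + b 0%nat * p 0%nat + (a 1%nat * q 1%nat + b 1%nat * p 1%nat)) in Him.
    split.
    - transitivity (A * theta_re n X - B * theta_im n Jm X); [unfold A, B; ring|].
      rewrite Hre, Him. ring.
    - transitivity (A * theta_im n Jm X + B * theta_re n X); [unfold A, B; ring|].
      rewrite Hre, Him. ring. }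
  assert (Hw0 : p 0%nat = 0 /\ q 0%nat = 0).
  { pose (a l := if Nat.eqb l 0 then p 1%nat else if Nat.eqb l 1 then - p 0%nat else 0).
    pose (b l := if Nat.eqb l 0 then q 1%nat else if Nat.eqb l 1 then - q 0%nat else 0).
    destruct (Hcomb a b) with 1%nat as [H1 H2]; try lia.
    - intros l Hl _. unfold a, b. destruct (Nat.eqb_spec l 0), (Nat.eqb_spec l 1); try lia. auto.
    - unfold a, b; simpl. ring.
    - unfold a, b; simpl. ring.
    - unfold a, b in H1, H2; simpl in H1, H2. split; lra. }
  pose (a l := if Nat.eqb l 0 then 1 else 0).
  destruct (Hcomb a (fun _ => 0)) with 0%nat as [H1 _]; try lia.
  - intros l Hl _. unfold a. destruct (Nat.eqb_spec l 0); [lia|auto].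
  - unfold a; simpl. destruct Hw0 as [-> ->]. ring.
  - unfold a; simpl. destruct Hw0 as [-> ->]. ring.
  - unfold a in H1; simpl in H1. lra.
Qed.

End Main.

Theorem theorem3p1 (n : nat) (Jm : nat -> nat -> R) :
  (1 <= n)%nat ->
  almost_complex n Jm ->
  compatible n Jm ->
  symplectic n Jm ->
  hol_type n Jm 1.
Proof.
  intros _ Hac Hcomp Hsym x. split.
  - apply hol_family_theta; assumption.
  - apply hol_family_le_1; assumption.
Qed.
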